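(* For every integer $\alpha\ge0$, \[ W_{2\alpha+2}=\Bigl(\sum_{n\ge1}a\bigl(5^{2\alpha+2}n-\delta'_\alpha\bigr)q^n\Bigr)\prod_{n\ge1}(1-q^n)(1-q^{2n}), \] where $\delta'_\alpha=\frac{5^{2\alpha+2}-1}{8}$.
   Context: The cubic partition function $a(n)$ is defined by $\sum_{n\ge 0}a(n)q^n=\prod_{n\ge 1}\frac{1}{(1-q^n)(1-q^{2n})}$ (with $a(m)=0$ for $m<0$). Let $F=q^3\prod_{n\ge1}\frac{(1-q^{25n})(1-q^{50n})}{(1-q^n)(1-q^{2n})}$ and for a formal Laurent series $f=\sum_n c(n)q^n$ let $U(f)=\sum_n c(5n)q^n$. Define $W_1=U(F)$, and for $k\ge1$: $W_{2k}=U(W_{2k-1})$ and $W_{2k+1}=U(W_{2k}F)$. *)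

From HB Require Import structures.
From mathcomp Require Import all_boot all_order all_algebra.
Set Implicit Arguments. Unset Strict Implicit. Unset Printing Implicit Defensive.
Import Order.TTheory GRing.Theory Num.Theory.
Local Open Scope ring_scope.

(* A formal power series sum_{n>=0} f n q^n with integer coefficients. *)
Definition ps := nat -> int.

Definition ps1 : ps := fun n => if n == 0%N then 1 else 0.

Definition psmul (f g : ps) : ps :=
  fun n => \sum_(0 <= i < n.+1) f i * g (n - i)%N.

Definition one_minus_qk (k : nat) : ps :=
  fun n => (if n == 0%N then 1 else 0) - (if n == k then 1 else 0).

Definition inv_one_minus_qk (k : nat) : ps :=
  fun n => if (0 < k)%N && (k %| n)%N then 1 else 0.

(* Infinite product prod_{k>=1} G k, for factors with G k = 1 mod q^k:
   the coefficient of q^n only depends on the factors with k <= n. *)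
Definition infprod (G : nat -> ps) : ps :=
  fun n => (\big[psmul/ps1]_(1 <= k < n.+1) G k) n.

Definition P12 : ps := infprod (fun k => psmul (one_minus_qk k) (one_minus_qk (2 * k))).

Definition cubic_gf : ps :=
  infprod (fun k => psmul (inv_one_minus_qk k) (inv_one_minus_qk (2 * k))).

Definition a (n : nat) : int := cubic_gf n.

Definition shift3 (f : ps) : ps := fun n => if (n < 3)%N then 0 else f (n - 3)%N.

Definition F : ps :=
  shift3 (psmul
    (infprod (fun k => psmul (one_minus_qk (25 * k)) (one_minus_qk (50 * k))))
    cubic_gf).

Definition U (f : ps) : ps := fun n => f (5 * n)%N.

(* Wp i = W_{i+1}:  W_1 = U F,  W_{2k} = U(W_{2k-1}),  W_{2k+1} = U(W_{2k} F). *)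
Fixpoint Wp (i : nat) : ps :=
  match i with
  | 0%N => U F
  | i'.+1 => if odd i' then U (psmul (Wp i') F) (* index i'+2 odd *)
             else U (Wp i')                     (* index i'+2 even *)
  end.

(* W j for j >= 1 (W 0 is an irrelevant junk value) *)
Definition W (j : nat) : ps := Wp j.-1.

(* delta'_alpha = (5^(2 alpha + 2) - 1) / 8  (exact division) *)
Definition delta' (alpha : nat) : nat := ((5 ^ (2 * alpha + 2) - 1) %/ 8)%N.

From HB Require Import structures.
From mathcomp Require Import all_boot all_order all_algebra zify.
From Stdlib Require Import FunctionalExtensionality.
Set Implicit Arguments. Unset Strict Implicit. Unset Printing Implicit Defensive.
Import GRing.Theory.
Local Open Scope ring_scope.

(* Put P := prod (1-q^n)(1-q^{2n}), so that F = q^3 P(q^25) / P(q) and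
   sum a(n) q^n = 1/P, and U_25 := U o U, which satisfies
   U_25 (f(q) g(q^25)) = U_25(f)(q) g(q).  Hence W_2 = U_25 (q^3/P) P, and if
   W_{2k} = R P then W_{2k+2} = U_25 (W_{2k} F) = U_25 (q^3 R) P.  Each step
   takes the 25-section of q^3 R, sending the index 5^{2k+2} n - delta'_k to
   5^{2k+2} (25 n - 3) - delta'_k = 5^{2k+4} n - delta'_{k+1},
   because delta'_{k+1} = 25 delta'_k + 3. *)

Lemma ps_ext (f g : ps) : (forall n, f n = g n) -> f = g.
Proof. by move=> fg; apply: functional_extensionality. Qed.

Lemma psmulE (f g : ps) n : psmul f g n = \sum_(0 <= i < n.+1) f i * g (n - i)%N.
Proof. by []. Qed.

Lemma sum_nat_if_eq (N j : nat) (h : nat -> int) :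
  \sum_(0 <= i < N) (if i == j then h i else 0) = if (j < N)%N then h j else 0.
Proof. by rewrite -big_mkcond big_nat1_eq. Qed.

Definition ps_trunc (N : nat) (f : ps) : {poly int} := \poly_(i < N) f i.

Lemma psmul_trunc N (f g : ps) n :
  (n < N)%N -> psmul f g n = (ps_trunc N f * ps_trunc N g)`_n.
Proof.
move=> ltnN; rewrite coefM psmulE big_mkord; apply: eq_bigr => -[i /= lein] _.
have ltiN : (i < N)%N := leq_ltn_trans (lein : (i <= n)%N) ltnN.
by rewrite !coef_poly ltiN (leq_ltn_trans (leq_subr i n) ltnN).
Qed.

Lemma coef_trunc_psmul n (f g : ps) i : (i <= n)%N ->
  (ps_trunc n.+1 (psmul f g))`_i = (ps_trunc n.+1 f * ps_trunc n.+1 g)`_i.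
Proof. by move=> lein; rewrite coef_poly ltnS lein; apply: psmul_trunc. Qed.

Lemma coefM_low (p p' q q' : {poly int}) n :
  (forall i, (i <= n)%N -> p`_i = p'`_i) -> (forall i, (i <= n)%N -> q`_i = q'`_i) ->
  (p * q)`_n = (p' * q')`_n.
Proof.
move=> pp' qq'; rewrite !coefM; apply: eq_bigr => -[i /= lein] _.
by rewrite pp' // qq' // leq_subr.
Qed.

Lemma psmulA : associative psmul.
Proof.
move=> f g h; apply: ps_ext => n; rewrite !(psmul_trunc _ _ (ltnSn n)).
rewrite (@coefM_low _ (ps_trunc n.+1 f) _ (ps_trunc n.+1 g * ps_trunc n.+1 h)) //;
  last by move=> i; apply: coef_trunc_psmul.
rewrite [RHS](@coefM_low _ (ps_trunc n.+1 f * ps_trunc n.+1 g) _ (ps_trunc n.+1 h)) ?mulrA //.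
by move=> i; apply: coef_trunc_psmul.
Qed.

Lemma psmulC : commutative psmul.
Proof. by move=> f g; apply: ps_ext => n; rewrite !(psmul_trunc _ _ (ltnSn n)) mulrC. Qed.

Lemma ps1_trunc N : ps_trunc N.+1 ps1 = 1.
Proof. by apply/polyP => -[|i]; rewrite coef_poly coef1 /ps1 //=; case: ltnP. Qed.

Lemma psmul1 : left_id ps1 psmul.
Proof.
move=> f; apply: ps_ext => n.
by rewrite (psmul_trunc _ _ (ltnSn n)) ps1_trunc mul1r coef_poly ltnSn.
Qed.

HB.instance Definition _ := Monoid.isComLaw.Build ps ps1 psmul psmulA psmulC psmul1.

Lemma psmulCA (f g h : ps) : psmul f (psmul g h) = psmul g (psmul f h).
Proof. by rewrite psmulA (psmulC f g) -psmulA. Qed.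

Lemma psmul_one_minus_qk k (g : ps) n :
  psmul (one_minus_qk k) g n = g n - (if (k <= n)%N then g (n - k)%N else 0).
Proof.
rewrite psmulE (eq_big_nat _ _ (F2 := fun i => (if i == 0%N then g (n - i)%N else 0)
                                        - (if i == k then g (n - i)%N else 0))).
  by rewrite sumrB !sum_nat_if_eq subn0.
by move=> i _; rewrite /one_minus_qk mulrBl; do 2 case: eqP; rewrite ?mul1r ?mul0r.
Qed.

Lemma one_minus_qkK k :
  (0 < k)%N -> psmul (one_minus_qk k) (inv_one_minus_qk k) = ps1.
Proof.
move=> k_gt0; apply: ps_ext => -[|n];
  rewrite psmul_one_minus_qk /inv_one_minus_qk /ps1 k_gt0 /=.
  by rewrite dvdn0 leqNgt k_gt0 subr0.
case: (leqP k n.+1) => [lekn|ltnk]; last by rewrite gtnNdvd.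
by rewrite -{1}(subnK lekn) dvdn_addl //; case: ifP.
Qed.

(* h = 1 mod q^k.  Factors G k of this kind make prod_{k >= 1} G k converge:
   the coefficient of q^n is fixed by the factors with k <= n. *)
Definition one_modX k (h : ps) := h 0%N = 1 /\ forall j, (0 < j < k)%N -> h j = 0.

Lemma psmul_one_modX k (f h : ps) n : one_modX k h -> (n < k)%N -> psmul f h n = f n.
Proof.
move=> [h0 hj] ltnk; rewrite psmulE.
rewrite (eq_big_nat _ _ (F2 := fun i => if i == n then f i else 0)).
  by rewrite sum_nat_if_eq ltnSn.
move=> i /andP[_ lein]; case: eqVneq => [->|neqin]; first by rewrite subnn h0 mulr1.
rewrite hj ?mulr0 // subn_gt0 ltn_neqAle neqin -ltnS lein /=.
exact: leq_ltn_trans (leq_subr _ _) ltnk.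
Qed.

Lemma one_modX_mul k (g h : ps) : one_modX k g -> one_modX k h -> one_modX k (psmul g h).
Proof.
move=> [g0 gj] hh; split; first by rewrite psmulE big_nat1 g0 hh.1 mulr1.
by move=> j jk; rewrite (psmul_one_modX _ hh (proj2 (andP jk))) gj.
Qed.

Lemma one_modX_le k k' (h : ps) : (k <= k')%N -> one_modX k' h -> one_modX k h.
Proof.
move=> lekk' [h0 hj]; split=> // j /andP[j_gt0 ltjk]; apply: hj.
by rewrite j_gt0 (leq_trans ltjk lekk').
Qed.

Lemma one_modX_one_minus_qk k : (0 < k)%N -> one_modX k (one_minus_qk k).
Proof.
move=> k_gt0; split; first by rewrite /one_minus_qk eq_sym (gtn_eqF k_gt0) subr0.
by move=> j /andP[j_gt0 ltjk]; rewrite /one_minus_qk (gtn_eqF j_gt0) (ltn_eqF ltjk) subr0.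
Qed.

Lemma one_modX_inv_one_minus_qk k : (0 < k)%N -> one_modX k (inv_one_minus_qk k).
Proof.
move=> k_gt0; rewrite /one_modX /inv_one_minus_qk k_gt0 dvdn0; split=> //.
by move=> j /andP[j_gt0 ltjk]; rewrite gtnNdvd.
Qed.

Lemma one_modX_double (h : nat -> ps) k :
  (forall k, (0 < k)%N -> one_modX k (h k)) ->
  (0 < k)%N -> one_modX k (psmul (h k) (h (2 * k)%N)).
Proof.
move=> hh k_gt0; apply: one_modX_mul; first exact: hh.
by apply: (one_modX_le (leq_pmull k (isT : (0 < 2)%N))); apply: hh; rewrite muln_gt0.
Qed.

Lemma partial_prod_stable (G : nat -> ps) n M :
  (forall k, (0 < k)%N -> one_modX k (G k)) -> (n < M)%N ->
  (\big[psmul/ps1]_(1 <= k < M) G k) n = infprod G n.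
Proof.
move=> G_one_modX; elim: M => // M IHM; rewrite ltnS leq_eqVlt => /orP[/eqP <- // | ltnM].
have M_gt0 : (0 < M)%N by apply: leq_ltn_trans ltnM.
by rewrite big_nat_recr //= (psmul_one_modX _ (G_one_modX _ M_gt0) ltnM) IHM.
Qed.

Lemma infprodM (G H : nat -> ps) :
  (forall k, (0 < k)%N -> one_modX k (G k)) -> (forall k, (0 < k)%N -> one_modX k (H k)) ->
  psmul (infprod G) (infprod H) = infprod (fun k => psmul (G k) (H k)).
Proof.
move=> G_one_modX H_one_modX; apply: ps_ext => n; rewrite [RHS]/infprod big_split /= !psmulE.
apply: eq_big_nat => i /andP[_ ltin].
have ltni : (n - i < n.+1)%N by rewrite ltnS leq_subr.
by rewrite (partial_prod_stable G_one_modX ltin) (partial_prod_stable H_one_modX ltni).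
Qed.

Definition P12_factor k := psmul (one_minus_qk k) (one_minus_qk (2 * k)).

Lemma one_modX_P12_factor k : (0 < k)%N -> one_modX k (P12_factor k).
Proof. exact: one_modX_double one_modX_one_minus_qk. Qed.

Lemma P12K : psmul P12 cubic_gf = ps1.
Proof.
rewrite /P12 /cubic_gf infprodM; last 2 first.
- exact: one_modX_P12_factor.
- by move=> k; apply: (one_modX_double one_modX_inv_one_minus_qk).
apply: ps_ext => n; rewrite /infprod big_nat_cond big1 // => k /andP[/andP[k_gt0 _] _].
have k2_gt0 : (0 < 2 * k)%N by rewrite muln_gt0.
rewrite -psmulA (psmulCA (one_minus_qk (2 * k))) psmulA.
by rewrite !one_minus_qkK // psmul1.
Qed.

Definition dilate (d : nat) (g : ps) : ps :=
  fun n => if (d %| n)%N then g (n %/ d)%N else 0.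
Definition sect (d : nat) (f : ps) : ps := fun n => f (d * n)%N.

Lemma U_U (f : ps) : U (U f) = sect 25 f.
Proof. by apply: ps_ext => n; rewrite /U /sect mulnA. Qed.

Section Dilation.
Variable d : nat.
Hypothesis d_gt0 : (0 < d)%N.

Lemma dilate_mul g j : dilate d g (d * j)%N = g j.
Proof. by rewrite /dilate dvdn_mulr // mulKn. Qed.

Lemma sum_multiples (h : nat -> int) m : (forall i, ~~ (d %| i)%N -> h i = 0) ->
  \sum_(0 <= i < (d * m).+1) h i = \sum_(0 <= j < m.+1) h (d * j)%N.
Proof.
move=> h0; rewrite big_nat_recr // [RHS]big_nat_recr //=; congr (_ + _).
elim: m => [|m IHm]; first by rewrite muln0 !big_geq.
rewrite mulnSr (big_cat_nat _ (n := (d * m)%N)) ?leq_addr // IHm big_nat_recr //=.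
congr (_ + _).
have ltdm : (d * m < d * m + d)%N by rewrite -{1}(addn0 (d * m)%N) ltn_add2l.
rewrite (big_ltn ltdm) big_nat_cond big1 ?addr0 // => i /andP[/andP[lt_dm_i lt_i] _].
apply: h0; rewrite -(subnKC (ltnW lt_dm_i)) dvdn_addr ?dvdn_mulr // gtnNdvd //; lia.
Qed.

Lemma sum_dilate (f g : ps) m :
  \sum_(0 <= i < (d * m).+1) dilate d g i * f (d * m - i)%N
  = \sum_(0 <= j < m.+1) g j * f (d * (m - j))%N.
Proof.
rewrite sum_multiples; last by move=> i ndi; rewrite /dilate (negbTE ndi) mul0r.
by apply: eq_big_nat => j _; rewrite dilate_mul mulnBr.
Qed.

Lemma sect_mul_dilate (f g : ps) : sect d (psmul f (dilate d g)) = psmul (sect d f) g.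
Proof. by apply: ps_ext => n; rewrite /sect psmulC psmulE sum_dilate psmulC psmulE. Qed.

Lemma dilateM (f g : ps) : dilate d (psmul f g) = psmul (dilate d f) (dilate d g).
Proof.
apply: ps_ext => n; case dn: (d %| n)%N.
  rewrite -(divnK dn) mulnC dilate_mul !psmulE.
  rewrite [RHS](sum_multiples (h := fun i => _ * dilate d g (d * (n %/ d) - i)%N)).
    by apply: eq_big_nat => j _; rewrite -mulnBr !dilate_mul.
  by move=> i ndi; rewrite /dilate (negbTE ndi) mul0r.
rewrite /dilate dn psmulE big_nat_cond big1 // => i /andP[/andP[_ lein] _].
case: ifP => di; last by rewrite mul0r.
by rewrite -(subnKC (lein : (i <= n)%N)) dvdn_addr // in dn; rewrite dn mulr0.
Qed.

Lemma dilate1 : dilate d ps1 = ps1.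
Proof.
apply: ps_ext => -[|n]; rewrite /dilate /ps1; first by rewrite dvdn0 div0n.
case: ifP => // dn; case: eqP => // n0.
by move: (divnK dn); rewrite n0 mul0n.
Qed.

Lemma dilate_one_minus_qk k : dilate d (one_minus_qk k) = one_minus_qk (d * k).
Proof.
apply: ps_ext => n; rewrite /dilate /one_minus_qk; case: ifP => dn.
  move: dn => /dvdnP[j ->].
  by rewrite mulnK // muln_eq0 (gtn_eqF d_gt0) orbF mulnC eqn_pmul2l.
case: eqVneq => [n0|_]; first by rewrite n0 dvdn0 in dn.
by case: eqP => [en|_]; [rewrite en dvdn_mulr in dn | rewrite subrr].
Qed.

End Dilation.

Lemma P12_dilate25 :
  infprod (fun k => psmul (one_minus_qk (25 * k)) (one_minus_qk (50 * k))) = dilate 25 P12.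
Proof.
have -> : (fun k => psmul (one_minus_qk (25 * k)) (one_minus_qk (50 * k)))
          = (fun k => dilate 25 (P12_factor k)).
  by apply: functional_extensionality => k; rewrite dilateM // !dilate_one_minus_qk // mulnA.
apply: ps_ext => n; rewrite /infprod -(big_morph _ (dilateM _) (dilate1 _)) //.
rewrite /dilate; case: ifP => // _.
by rewrite partial_prod_stable ?ltnS ?leq_div //; apply: one_modX_P12_factor.
Qed.

Definition q3 : ps := fun i => if i == 3%N then 1 else 0.

Lemma shift3E (f : ps) : shift3 f = psmul q3 f.
Proof.
apply: ps_ext => n; rewrite psmulE /shift3.
rewrite (eq_big_nat _ _ (F2 := fun i => if i == 3%N then f (n - i)%N else 0)).
  by rewrite sum_nat_if_eq [(3 < n.+1)%N]ltnS; case: (ltnP n 3).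
by move=> i _; rewrite /q3; case: eqP; rewrite ?mul1r ?mul0r.
Qed.

Lemma FE : F = shift3 (psmul cubic_gf (dilate 25 P12)).
Proof. by rewrite /F P12_dilate25 psmulC. Qed.

Lemma U_U_shift3_dilate (c : ps) :
  U (U (shift3 (psmul c (dilate 25 P12)))) = psmul (sect 25 (shift3 c)) P12.
Proof. by rewrite U_U !shift3E psmulA sect_mul_dilate. Qed.

Lemma W2 : W 2 = U (U F).
Proof. by []. Qed.

Lemma WpS_odd i : odd i -> Wp i.+1 = U (psmul (Wp i) F).
Proof. by move=> /= ->. Qed.

Lemma WpS_even i : ~~ odd i -> Wp i.+1 = U (Wp i).
Proof. by move=> /= /negbTE ->. Qed.

Lemma W_evenS k : W (2 * k.+1 + 2) = U (U (psmul (W (2 * k + 2)) F)).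
Proof.
change (Wp (2 * k.+1 + 2)%N.-1 = U (U (psmul (Wp (2 * k + 2)%N.-1) F))).
have -> : ((2 * k.+1 + 2).-1 = (2 * k + 1).+2)%N by lia.
have -> : ((2 * k + 2).-1 = 2 * k + 1)%N by lia.
have odd2k1 : odd (2 * k + 1) by rewrite oddD oddM.
by rewrite WpS_even ?WpS_odd //= odd2k1.
Qed.

Definition cubic_sect (al : nat) : ps :=
  fun n => if n == 0%N then 0 else a (5 ^ (2 * al + 2) * n - delta' al)%N.

Lemma delta'E al : (8 * delta' al + 1 = 5 ^ (2 * al + 2))%N.
Proof.
have five_pow_mod8 : (5 ^ (2 * al + 2) %% 8 = 1)%N.
  by rewrite -mulnSr expnM -modnXm /= exp1n.
rewrite /delta' {1 2}(divn_eq (5 ^ (2 * al + 2)) 8) five_pow_mod8.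
by rewrite addnK mulnK // mulnC.
Qed.

Lemma cubic_index_step al n : (0 < n)%N ->
  (5 ^ (2 * al + 2) * (25 * n - 3) - delta' al
   = 5 ^ (2 * al.+1 + 2) * n - delta' al.+1)%N.
Proof.
have e25 : (5 ^ (2 * al.+1 + 2) = 25 * 5 ^ (2 * al + 2))%N.
  by rewrite mulnS -addnA expnD.
have := delta'E al.+1; have := delta'E al; rewrite e25.
move: (5 ^ _)%N (delta' al) (delta' al.+1) => e d d' <- ed' n_gt0; nia.
Qed.

Lemma cubic_sect_step al : sect 25 (shift3 (cubic_sect al)) = cubic_sect al.+1.
Proof.
apply: ps_ext => -[|n] //; rewrite /sect /shift3 /cubic_sect.
have -> : (25 * n.+1 < 3)%N = false by lia.
have -> : (25 * n.+1 - 3 == 0)%N = false by lia.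
by rewrite cubic_index_step.
Qed.

Lemma cubic_sect0 : sect 25 (shift3 cubic_gf) = cubic_sect 0.
Proof. by apply: ps_ext => -[|n] //; rewrite /sect /shift3 /cubic_sect mulnS. Qed.

Theorem mainTheorem8 (alpha : nat) (m : nat) :
  W (2 * alpha + 2) m =
  psmul (fun n => if n == 0%N then 0
                  else a (5 ^ (2 * alpha + 2) * n - delta' alpha)%N)
        P12 m.
Proof.
suff -> : W (2 * alpha + 2) = psmul (cubic_sect alpha) P12 by [].
elim: alpha => [|al IH]; first by rewrite W2 FE U_U_shift3_dilate cubic_sect0.
have cancel_P12 : psmul (psmul (cubic_sect al) P12) (psmul cubic_gf (dilate 25 P12))
                  = psmul (cubic_sect al) (dilate 25 P12).
  by rewrite -psmulA (psmulA P12) P12K psmul1.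
rewrite W_evenS IH FE shift3E psmulCA -shift3E cancel_P12.
by rewrite U_U_shift3_dilate cubic_sect_step.
Qed.
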